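(* Let $W_i=V_i\epsilon_i$, $i=1,\dots,n$, with $V_i\sim\mathcal M[\underline\sigma,\overline\sigma]$ and $\epsilon_i\sim N(0,1)$. Then $$V_1\dashrightarrow\epsilon_1\dashrightarrow V_2\dashrightarrow\epsilon_2\dashrightarrow\cdots\dashrightarrow V_n\dashrightarrow\epsilon_n$$ holds if and only if both (F1) $(V_1,\epsilon_1)\dashrightarrow(V_2,\epsilon_2)\dashrightarrow\cdots\dashrightarrow(V_n,\epsilon_n)$ and (F2) $V_i\dashrightarrow\epsilon_i$ for $i=1,\dots,n$ hold.
   Context: Sublinear expectation space $(\Omega,\mathcal H,\hat{\mathbb E})$, $\hat{\mathbb E}[X]=\sup_{Q\in\mathcal P}E_Q[X]$. $C_{b,Lip}$: bounded Lipschitz functions. For random vectors $X,Y$, $X\dashrightarrow Y$ ($Y$ independent from $X$) means $\hat{\mathbb E}[\varphi(X,Y)]=\hat{\mathbb E}[\hat{\mathbb E}[\varphi(x,Y)]_{x=X}]$ for all $\varphi\in C_{b,Lip}$; $X_1\dashrightarrow\cdots\dashrightarrow X_n$ means $(X_1,\dots,X_i)\dashrightarrow X_{i+1}$ for $i=1,\dots,n-1$. $V\sim\mathcal M[\underline\sigma,\overline\sigma]$: $\hat{\mathbb E}[\varphi(V)]=\max_{v\in[\underline\sigma,\overline\sigma]}\varphi(v)$ for locally Lipschitz-growth $\varphi$. $\epsilon\sim N(0,1)$: $\hat{\mathbb E}[\varphi(\epsilon)]=E[\varphi(Z)]$, $Z$ classical standard normal. *)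

From HB Require Import structures.
From mathcomp Require Import all_boot all_order all_algebra.
From mathcomp Require Import all_classical all_reals all_analysis.
Set Implicit Arguments. Unset Strict Implicit. Unset Printing Implicit Defensive.
Import Order.TTheory GRing.Theory Num.Theory.
Import numFieldNormedType.Exports.
Local Open Scope classical_set_scope.
Local Open Scope ring_scope.

Section SublinearExpectation.
Context {d : measure_display} {Omega : measurableType d} {R : realType}.
Variable P : set (probability Omega R).

Definition sExpE (f : Omega -> \bar R) : \bar R :=
  ereal_sup [set (\int[Q]_w f w)%E | Q in P].

Definition sExp (X : Omega -> R) : \bar R := sExpE (fun w => (X w)%:E).

(* bounded Lipschitz functions on R^n (row vectors, sup norm) *)
Definition bLip (n : nat) (phi : 'rV[R]_n -> R) : Prop :=
  (exists M : R, forall x, `|phi x| <= M) /\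
  (exists L : R, forall x y, `|phi x - phi y| <= L * `|x - y|).

(* Y is independent from X :  X --> Y *)
Definition indep (p q : nat) (X : Omega -> 'rV[R]_p) (Y : Omega -> 'rV[R]_q)
  : Prop :=
  forall phi : 'rV[R]_(p + q) -> R, bLip phi ->
    sExp (fun w => phi (row_mx (X w) (Y w))) =
    sExpE (fun w => sExp (fun w' => phi (row_mx (X w) (Y w')))).

Definition locLipGrowth (phi : R -> R) : Prop :=
  exists (C : R) (k : nat), forall x y,
    `|phi x - phi y| <= C * (1 + `|x| ^+ k + `|y| ^+ k) * `|x - y|.

Definition maximal_distributed (V : Omega -> R) (sl sh : R) : Prop :=
  forall phi, locLipGrowth phi ->
    sExp (phi \o V) = ereal_sup [set (phi v)%:E | v in `[sl, sh]].

Definition std_normal (e : Omega -> R) : Prop :=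
  forall phi, locLipGrowth phi ->
    sExp (phi \o e) =
    (\int[lebesgue_measure]_x (phi x * normal_pdf 0 1 x)%:E)%E.

Definition blk (Z : nat -> Omega -> R) (k m : nat) : Omega -> 'rV[R]_m :=
  fun w => \row_(j < m) Z (k + j)%N w.

Definition interleave (V e : nat -> Omega -> R) : nat -> Omega -> R :=
  fun k => if odd k then e k./2 else V k./2.

(* Z_1 --> Z_2 --> ... --> Z_m for scalar random variables (0-indexed) *)
Definition seq_indep (Z : nat -> Omega -> R) (m : nat) : Prop :=
  forall k, (1 <= k)%N -> (k < m)%N -> indep (blk Z 0 k) (blk Z k 1).

(* (F1): (V_1,e_1) --> (V_2,e_2) --> ... --> (V_n,e_n) *)
Definition F1 (V e : nat -> Omega -> R) (n : nat) : Prop :=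
  forall i, (1 <= i)%N -> (i < n)%N ->
    indep (blk (interleave V e) 0 (2 * i)) (blk (interleave V e) (2 * i) 2).

Definition F2 (V e : nat -> Omega -> R) (n : nat) : Prop :=
  forall i, (i < n)%N -> indep (blk V i 1) (blk e i 1).

End SublinearExpectation.

(* Independence can be regrouped. Write psi u := E^[phi(u, Z)].
   - X --> (Y, Z) and Y --> Z imply (X, Y) --> Z:
       E^[phi(X, Y, Z)] = E^[E^[phi(x, Y, Z)]_{x=X}] = E^[E^[psi(x, Y)]_{x=X}] = E^[psi(X, Y)].
   - X --> Y and (X, Y) --> Z imply X --> (Y, Z): the same chain read backwards.
   The middle step is the tower property E^[phi(x, Y, Z)] = E^[psi(x, Y)], valid for Y --> Z;
   the last uses X --> Y and that psi is again bounded Lipschitz (X --> Y, resp. Y --> Z,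
   follows from the hypotheses by projection). With X = (V_1, e_1, ..., V_(i-1), e_(i-1)),
   Y = V_i and Z = e_i, the two rules turn the interleaved chain into (F1) and (F2) and back. *)

From HB Require Import structures.
From mathcomp Require Import all_boot all_order all_algebra.
From mathcomp Require Import all_classical all_reals all_analysis.
From mathcomp Require Import zify.
Set Implicit Arguments. Unset Strict Implicit. Unset Printing Implicit Defensive.
Import Order.TTheory GRing.Theory Num.Theory.
Local Open Scope classical_set_scope.
Local Open Scope ring_scope.

Section MatrixNorm.
Context {K : realDomainType}.

Lemma mx_norm_ge_entry m n (A : 'M[K]_(m, n)) i j : `|A i j| <= `|A|.
Proof.
by rewrite [leRHS]/Num.norm /= mx_normrE; apply/bigmax_geP; right; exists (i, j).
Qed.

Lemma mx_norm_le m n (A : 'M[K]_(m, n)) c :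
  0 <= c -> (forall i j, `|A i j| <= c) -> `|A| <= c.
Proof.
move=> c0 Ac; rewrite [leLHS]/Num.norm /= mx_normrE.
by apply/bigmax_leP; split => // -[i j] _; exact: Ac.
Qed.

Lemma mx_norm_colsub m n n' (f : 'I_n' -> 'I_n) (A : 'M[K]_(m, n)) :
  `|colsub f A| <= `|A|.
Proof. by apply: mx_norm_le => // i j; rewrite mxE; exact: mx_norm_ge_entry. Qed.

Lemma mx_norm_row_mx m n1 n2 (A1 : 'M[K]_(m, n1)) (A2 : 'M[K]_(m, n2)) :
  `|row_mx A1 A2| <= `|A1| + `|A2|.
Proof.
apply: mx_norm_le => [|i j]; first by rewrite addr_ge0.
case: (split_ordP j) => k ->; rewrite (row_mxEl, row_mxEr).
  by rewrite ler_wpDr // mx_norm_ge_entry.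
by rewrite ler_wpDl // mx_norm_ge_entry.
Qed.

End MatrixNorm.

Lemma lipschitz_continuous (R : realFieldType) (V W : normedModType R) (f : V -> W) L :
  (forall x y, `|f x - f y| <= L * `|x - y|) -> continuous f.
Proof.
move=> fL x; apply/cvgrPdist_lt => e e0.
have L1 : 0 < `|L| + 1 by rewrite ltr_wpDl.
near=> y; apply: le_lt_trans (fL x y) _.
apply: (@le_lt_trans _ _ ((`|L| + 1) * `|x - y|)).
  by apply: ler_wpM2r => //; rewrite (le_trans (ler_norm L)) ?lerDl.
rewrite -ltr_pdivlMl //; near: y.
by apply: cvgr_dist_lt; [exact: cvg_id | rewrite mulr_gt0 ?invr_gt0].
Unshelve. all: end_near.
Qed.

Section SublinearExpectation.
Context {d : measure_display} {Omega : measurableType d} {R : realType}.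
Implicit Types (Q : probability Omega R) (f g : Omega -> R).

Lemma bounded_integrable Q f M :
  measurable_fun setT f -> (forall w, `|f w| <= M) -> Q.-integrable setT (fun w => (f w)%:E).
Proof.
move=> mf fM; apply: measurable_bounded_integrable => //.
  by rewrite ltey_eq fin_num_measure.
rewrite /bounded_near; near=> M' => w _ /=; apply: le_trans (fM w) _.
by near: M'; apply: nbhs_pinfty_ge; rewrite num_real.
Unshelve. all: end_near.
Qed.

Lemma integral_cst_probability Q c : (\int[Q]_w c%:E)%E = c%:E.
Proof.
by rewrite integral_cst // [X in (_ * X)%E](_ : _ = 1%E) ?mule1 //; exact: probability_setT.
Qed.

Lemma integral_le_shift Q f g c M :
  measurable_fun setT f -> measurable_fun setT g ->
  (forall w, `|f w| <= M) -> (forall w, `|g w| <= M) ->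
  (forall w, f w <= g w + c) ->
  (\int[Q]_w (f w)%:E <= \int[Q]_w (g w)%:E + c%:E)%E.
Proof.
move=> mf mg fM gM fgc.
have mc : measurable_fun setT (fun _ : Omega => c) by exact: measurable_cst.
have ig := bounded_integrable Q mg gM.
have ic := bounded_integrable Q mc (fun=> lexx `|c|).
rewrite -(integral_cst_probability Q c) -integralD //.
apply: le_integral => //; first exact: (bounded_integrable Q mf fM).
  apply: (@bounded_integrable Q _ (M + `|c|)).
    exact: measurable_realfun.measurable_funD.
  by move=> w; rewrite (le_trans (ler_normD _ _)) ?lerD2r.
by move=> w _; rewrite /= -EFinD lee_fin.
Qed.

Variable P : set (probability Omega R).

Lemma sExp_le_shift f g c M :
  measurable_fun setT f -> measurable_fun setT g ->
  (forall w, `|f w| <= M) -> (forall w, `|g w| <= M) ->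
  (forall w, f w <= g w + c) ->
  (sExp P f <= sExp P g + c%:E)%E.
Proof.
move=> mf mg fM gM fgc; apply/ereal_supP => _ [Q PQ <-].
apply: le_trans (integral_le_shift Q mf mg fM gM fgc) _.
by rewrite leeD2r //; apply: ereal_sup_ubound; exists Q.
Qed.

Lemma sExp_cst c : P !=set0 -> sExp P (fun=> c) = c%:E.
Proof.
case=> Q PQ; rewrite /sExp /sExpE.
have -> : [set (\int[Q']_w (c%:E))%E | Q' in P] = [set c%:E].
  apply/seteqP; split => x /=.
    by case=> Q' _ <-; rewrite integral_cst_probability.
  by move=> ->; exists Q => //; rewrite integral_cst_probability.
by rewrite ereal_sup1.
Qed.

Lemma sExp_bounded f M : P !=set0 -> measurable_fun setT f ->
  (forall w, `|f w| <= M) ->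
  sExp P f = (fine (sExp P f))%:E /\ `|fine (sExp P f)| <= M.
Proof.
move=> P0 mf fM.
have M0 : 0 <= M by rewrite (le_trans _ (fM point)).
have mc : measurable_fun setT (fun _ : Omega => 0 : R) by exact: measurable_cst.
have c0 (w : Omega) : `|0 : R| <= M by rewrite normr0.
have up : (sExp P f <= M%:E)%E.
  have := sExp_le_shift (c := M) mf mc fM c0.
  rewrite sExp_cst // add0e; apply => w.
  by rewrite add0r (le_trans (ler_norm _)).
have lo : (0 <= sExp P f + M%:E)%E.
  have := sExp_le_shift (c := M) mc mf c0 fM.
  rewrite sExp_cst //; apply => w.
  by rewrite -lerBlDr sub0r; move: (fM w); rewrite ler_norml => /andP[].
move: up lo; case: (sExp P f) => [r| |] //=; rewrite !lee_fin => up lo.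
by split => //; rewrite ler_norml up andbT -lerBlDr sub0r in lo *.
Qed.

End SublinearExpectation.

Section BoundedLipschitz.
Context {R : realType}.

Lemma bLip_lipschitz_ge0 n (phi : 'rV[R]_n -> R) : bLip phi ->
  exists2 L, 0 <= L & forall x y, `|phi x - phi y| <= L * `|x - y|.
Proof.
case=> _ [L phiL]; exists `|L| => // x y.
by rewrite (le_trans (phiL x y)) // ler_wpM2r // ler_norm.
Qed.

Lemma bLip_comp m n (K : R) (f : 'rV[R]_m -> 'rV[R]_n) (phi : 'rV[R]_n -> R) :
  bLip phi -> (forall z z', `|f z - f z'| <= K * `|z - z'|) ->
  bLip (fun z => phi (f z)).
Proof.
move=> phiL fK; have [[B phiB] _] := phiL; have [L L0 {}phiL] := bLip_lipschitz_ge0 phiL.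
split; first by exists B.
by exists (L * K) => z z'; rewrite (le_trans (phiL _ _)) // -mulrA ler_wpM2l.
Qed.

Lemma bLip_colsub n n' (f : 'I_n' -> 'I_n) (phi : 'rV[R]_n' -> R) :
  bLip phi -> bLip (fun z => phi (colsub f z)).
Proof.
move=> phiL; apply: (bLip_comp (K := 1) phiL) => z z'.
rewrite mul1r (_ : _ - _ = colsub f (z - z')) ?mx_norm_colsub //.
by apply/rowP => j; rewrite !mxE.
Qed.

Lemma bLip_row_mxl m n (phi : 'rV[R]_(m + n) -> R) (y : 'rV[R]_m) :
  bLip phi -> bLip (fun z => phi (row_mx y z)).
Proof.
move=> phiL; apply: (bLip_comp (K := 1) phiL) => z z'.
by rewrite mul1r opp_row_mx add_row_mx subrr (le_trans (mx_norm_row_mx _ _)) ?normr0 ?add0r.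
Qed.

End BoundedLipschitz.

Definition split_map p q p' q' (f : 'I_p' -> 'I_p) (g : 'I_q' -> 'I_q)
    (k : 'I_(p' + q')) : 'I_(p + q) :=
  match fintype.split k with inl i => lshift q (f i) | inr j => rshift p (g j) end.

Lemma colsub_split_map (K : Type) p q p' q' (f : 'I_p' -> 'I_p) (g : 'I_q' -> 'I_q)
    (x : 'rV[K]_p) (y : 'rV[K]_q) :
  colsub (split_map f g) (row_mx x y) = row_mx (colsub f x) (colsub g y).
Proof.
apply/rowP => k; rewrite mxE /split_map.
case: (split_ordP k) => j ->; rewrite ?(unsplitK (inl j)) ?(unsplitK (inr j)).
  by rewrite !row_mxEl mxE.
by rewrite !row_mxEr mxE.
Qed.

Lemma colsub_row_mxA (K : Type) p q r (x : 'rV[K]_p) (y : 'rV[K]_q) (z : 'rV[K]_r) :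
  colsub (cast_ord (esym (addnA p q r))) (row_mx x (row_mx y z)) = row_mx (row_mx x y) z.
Proof. by rewrite colsub_cast esymK row_mxA; exact: (castmxKV erefl). Qed.

Lemma colsub_row_mxAV (K : Type) p q r (x : 'rV[K]_p) (y : 'rV[K]_q) (z : 'rV[K]_r) :
  colsub (cast_ord (addnA p q r)) (row_mx (row_mx x y) z) = row_mx x (row_mx y z).
Proof. by rewrite colsub_cast row_mxA. Qed.

Section Independence.
Context {d : measure_display} {Omega : measurableType d} {R : realType}.
Variable P : set (probability Omega R).

Lemma indep_set0 p q (X : Omega -> 'rV[R]_p) (Y : Omega -> 'rV[R]_q) :
  indep set0 X Y.
Proof.
have sExpE_ninfty h : sExpE set0 h = -oo%E by rewrite /sExpE image_set0 ereal_sup0.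
by move=> phi _; rewrite /sExp !sExpE_ninfty.
Qed.

Lemma eq_sExp (f g : Omega -> R) : f =1 g -> sExp P f = sExp P g.
Proof. by move=> /funext ->. Qed.

Lemma eq_sExpE (f g : Omega -> \bar R) : f =1 g -> sExpE P f = sExpE P g.
Proof. by move=> /funext ->. Qed.

Lemma indep_colsub p q p' q' (f : 'I_p' -> 'I_p) (g : 'I_q' -> 'I_q)
    (X : Omega -> 'rV[R]_p) (Y : Omega -> 'rV[R]_q)
    (X' : Omega -> 'rV[R]_p') (Y' : Omega -> 'rV[R]_q') :
  (forall w, X' w = colsub f (X w)) -> (forall w, Y' w = colsub g (Y w)) ->
  indep P X Y -> indep P X' Y'.
Proof.
move=> /funext-> /funext-> XY phi phiL.
under eq_sExp do rewrite -colsub_split_map.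
under eq_sExpE do under eq_sExp do rewrite -colsub_split_map.
exact: XY (bLip_colsub _ phiL).
Qed.

Lemma indep_drop_left p q r (X : Omega -> 'rV[R]_p) (Y : Omega -> 'rV[R]_q)
    (Z : Omega -> 'rV[R]_r) :
  indep P (fun w => row_mx (X w) (Y w)) Z -> indep P Y Z.
Proof.
move=> XYZ; apply: (indep_colsub (f := @rshift p q) (g := id) _ _ XYZ) => w.
  by rewrite -rsubmxEsub row_mxKr.
by rewrite mxsub_id.
Qed.

Lemma indep_drop_right p q r (X : Omega -> 'rV[R]_p) (Y : Omega -> 'rV[R]_q)
    (Z : Omega -> 'rV[R]_r) :
  indep P X (fun w => row_mx (Y w) (Z w)) -> indep P X Y.
Proof.
move=> XYZ; apply: (indep_colsub (f := id) (g := lshift r) _ _ XYZ) => w.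
  by rewrite mxsub_id.
by rewrite -lsubmxEsub row_mxKl.
Qed.

(* Stands in for Borel measurability of a random vector: 'rV[R]_n carries no
   sigma-algebra here, and this is all that finiteness of E^[phi(y, Z)] requires. *)
Definition bLip_measurable n (Z : Omega -> 'rV[R]_n) : Prop :=
  forall g : 'rV[R]_n -> R, bLip g -> measurable_fun setT (fun w => g (Z w)).

Lemma bLip_measurable_rV1 (Z : Omega -> 'rV[R]_1) :
  measurable_fun setT (fun w => Z w 0 0) -> bLip_measurable Z.
Proof.
move=> mZ g /bLip_lipschitz_ge0 [L L0 gL].
have -> : (fun w => g (Z w)) = (fun t => g (const_mx t)) \o (fun w => Z w 0 0).
  by apply/funext => w /=; congr g; apply/rowP => j; rewrite (ord1 j) mxE.
apply: measurableT_comp mZ; apply: measurable_realfun.continuous_measurable_fun.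
apply: (@lipschitz_continuous _ _ _ _ L) => t t'.
apply: le_trans (gL _ _) _; rewrite ler_wpM2l //.
by apply: mx_norm_le => // i j; rewrite !mxE.
Qed.

Lemma bLip_measurable_blk1 (Z : nat -> Omega -> R) k :
  measurable_fun setT (Z k) -> bLip_measurable (blk Z k 1).
Proof.
move=> mZ; apply: bLip_measurable_rV1.
by have -> : (fun w => blk Z k 1 w 0 0) = Z k by apply/funext => w; rewrite mxE addn0.
Qed.

End Independence.

Section PartialExpectation.
Context {d : measure_display} {Omega : measurableType d} {R : realType}.
Variable P : set (probability Omega R).

(* y |-> E^[phi(y, Z)]; [fine] would send an infinite value to 0, but by [sExp_partial]
   the value is finite whenever P is nonempty and Z is [bLip_measurable]. *)
Definition partial_sExp q r (phi : 'rV[R]_(q + r) -> R) (Z : Omega -> 'rV[R]_r)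
    (y : 'rV[R]_q) : R :=
  fine (sExp P (fun w => phi (row_mx y (Z w)))).

Section Tower.
Variables (r : nat) (Z : Omega -> 'rV[R]_r).
Hypotheses (P0 : P !=set0) (mZ : bLip_measurable Z).

Lemma sExp_partial q (phi : 'rV[R]_(q + r) -> R) (y : 'rV[R]_q) : bLip phi ->
  sExp P (fun w => phi (row_mx y (Z w))) = (partial_sExp phi Z y)%:E.
Proof.
move=> phiL; have [[B phiB] _] := phiL.
exact: (sExp_bounded P0 (mZ (bLip_row_mxl y phiL)) (fun=> phiB _)).1.
Qed.

Lemma bLip_partial_sExp q (phi : 'rV[R]_(q + r) -> R) :
  bLip phi -> bLip (partial_sExp phi Z).
Proof.
move=> phiL; have [[B phiB] _] := phiL; have [L L0 phiL'] := bLip_lipschitz_ge0 phiL.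
have mphi y := mZ (bLip_row_mxl y phiL).
split.
  by exists B => y; exact: (sExp_bounded P0 (mphi y) (fun=> phiB _)).2.
suff le y y' : partial_sExp phi Z y <= partial_sExp phi Z y' + L * `|y - y'|.
  by exists L => y y'; rewrite ler_distl le andbT lerBlDr distrC le.
have := sExp_le_shift P (c := L * `|y - y'|) (mphi y) (mphi y') (fun=> phiB _) (fun=> phiB _).
rewrite !sExp_partial // -EFinD lee_fin; apply => w; apply: ler_distlDr.
apply: le_trans (phiL' _ _) _; rewrite ler_wpM2l // opp_row_mx add_row_mx subrr.
by rewrite (le_trans (mx_norm_row_mx _ _)) ?normr0 ?addr0.
Qed.

Lemma indep_partialP p (X : Omega -> 'rV[R]_p) : indep P X Z <->
  forall phi, bLip phi ->
    sExp P (fun w => phi (row_mx (X w) (Z w))) =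
    sExp P (fun w => partial_sExp phi Z (X w)).
Proof.
have inner phi : bLip phi ->
    sExpE P (fun w => sExp P (fun w' => phi (row_mx (X w) (Z w')))) =
    sExp P (fun w => partial_sExp phi Z (X w)).
  by move=> phiL; apply: eq_sExpE => w; rewrite sExp_partial.
by split => XZ phi phiL; rewrite XZ // inner.
Qed.

Lemma sExp_partial_tower p q (Y : Omega -> 'rV[R]_q) (phi : 'rV[R]_(p + q + r) -> R)
    (x : 'rV[R]_p) :
  indep P Y Z -> bLip phi ->
  sExp P (fun w => phi (row_mx (row_mx x (Y w)) (Z w))) =
  sExp P (fun w => partial_sExp phi Z (row_mx x (Y w))).
Proof.
move=> YZ phiL; pose cA := cast_ord (esym (addnA p q r)).
have phixL := bLip_row_mxl x (bLip_colsub cA phiL).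
under eq_sExp do rewrite -colsub_row_mxA.
rewrite (proj1 (indep_partialP Y) YZ _ phixL); apply: eq_sExp => w.
by congr fine; apply: eq_sExp => w'; rewrite colsub_row_mxA.
Qed.

End Tower.

Lemma indep_assocl p q r (X : Omega -> 'rV[R]_p) (Y : Omega -> 'rV[R]_q)
    (Z : Omega -> 'rV[R]_r) :
  bLip_measurable Z ->
  indep P X (fun w => row_mx (Y w) (Z w)) -> indep P Y Z ->
  indep P (fun w => row_mx (X w) (Y w)) Z.
Proof.
move=> mZ XYZ YZ; have [->|/set0P P0] := eqVneq P set0; first exact: indep_set0.
apply/(indep_partialP P0 mZ) => phi phiL; pose cA := cast_ord (esym (addnA p q r)).
under eq_sExp do rewrite -colsub_row_mxA.
rewrite (XYZ _ (bLip_colsub cA phiL)).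
rewrite (indep_drop_right XYZ (bLip_partial_sExp P0 mZ phiL)).
apply: eq_sExpE => w; rewrite -sExp_partial_tower //.
by apply: eq_sExp => w'; rewrite colsub_row_mxA.
Qed.

Lemma indep_assocr p q r (X : Omega -> 'rV[R]_p) (Y : Omega -> 'rV[R]_q)
    (Z : Omega -> 'rV[R]_r) :
  bLip_measurable Z ->
  indep P X Y -> indep P (fun w => row_mx (X w) (Y w)) Z ->
  indep P X (fun w => row_mx (Y w) (Z w)).
Proof.
move=> mZ XY XYZ; have [->|/set0P P0] := eqVneq P set0; first exact: indep_set0.
have YZ := indep_drop_left XYZ.
move=> phi phiL; pose cA := cast_ord (addnA p q r).
have phiAL := bLip_colsub cA phiL.
under eq_sExp do rewrite -colsub_row_mxAV.
rewrite (proj1 (indep_partialP P0 mZ _) XYZ _ phiAL).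
rewrite (XY _ (bLip_partial_sExp P0 mZ phiAL)).
apply: eq_sExpE => w; rewrite -sExp_partial_tower //.
by apply: eq_sExp => w'; rewrite colsub_row_mxAV.
Qed.

End PartialExpectation.

Section Interleave.
Context {d : measure_display} {Omega : measurableType d} {R : realType}.

Lemma blk_addn (Z : nat -> Omega -> R) k a b :
  blk Z k (a + b) = fun w => row_mx (blk Z k a w) (blk Z (k + a) b w).
Proof.
apply/funext => w; apply/rowP => j; rewrite mxE.
by case: (split_ordP j) => l ->; rewrite (row_mxEl, row_mxEr) mxE ?addnA.
Qed.

Variables V e : nat -> Omega -> R.

Lemma blk_interleave_even i : blk (interleave V e) (2 * i) 1 = blk V i 1.
Proof.
apply/funext => w; apply/rowP => j.
by rewrite !mxE (ord1 j) !addn0 /interleave mul2n odd_double doubleK.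
Qed.

Lemma blk_interleave_odd i : blk (interleave V e) (2 * i + 1) 1 = blk e i 1.
Proof.
apply/funext => w; apply/rowP => j.
by rewrite !mxE (ord1 j) !addn0 /interleave mul2n addn1 /= odd_double uphalf_double.
Qed.

End Interleave.

Unset Implicit Arguments.

Theorem mainTheorem8 (d : measure_display) (Omega : measurableType d)
  (R : realType) (P : set (probability Omega R)) (sl sh : R) (n : nat)
  (V e : nat -> Omega -> R) :
  0 <= sl -> sl <= sh ->
  (forall i, (i < n)%N -> measurable_fun setT (V i)) ->
  (forall i, (i < n)%N -> measurable_fun setT (e i)) ->
  (forall i, (i < n)%N -> maximal_distributed P (V i) sl sh) ->
  (forall i, (i < n)%N -> std_normal P (e i)) ->
  (seq_indep P (interleave V e) (2 * n) <-> (F1 P V e n /\ F2 P V e n)).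
Proof.
move=> _ _ _ me _ _; set Z := interleave V e.
have mE i : (i < n)%N -> bLip_measurable (blk Z (2 * i + 1) 1).
  by move=> lin; rewrite blk_interleave_odd; exact: bLip_measurable_blk1 (me i lin).
have XV i : blk Z 0 (2 * i + 1) = fun w => row_mx (blk Z 0 (2 * i) w) (blk Z (2 * i) 1 w).
  by rewrite blk_addn add0n.
have VE i : blk Z (2 * i) 2 = fun w => row_mx (blk Z (2 * i) 1 w) (blk Z (2 * i + 1) 1 w).
  exact: blk_addn Z (2 * i) 1 1.
split => [Hchain | [HF1 HF2]].
  have HF2 : F2 P V e n.
    move=> i lin; have := Hchain (2 * i + 1) ltac:(lia) ltac:(lia).
    by rewrite XV => /indep_drop_left; rewrite blk_interleave_even blk_interleave_odd.
  split => // i i1 lin; rewrite VE.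
  apply: (indep_assocr (mE i lin) (Hchain (2 * i) ltac:(lia) ltac:(lia))).
  by rewrite -XV; apply: Hchain; lia.
have HVE i : (i < n)%N -> indep P (blk Z (2 * i) 1) (blk Z (2 * i + 1) 1).
  by move=> lin; rewrite blk_interleave_even blk_interleave_odd; exact: HF2.
move=> k; have [i [->|->] k1 k2] : exists i, k = (2 * i)%N \/ k = (2 * i + 1)%N.
- by exists (k %/ 2)%N; lia.
- have := HF1 i ltac:(lia) ltac:(lia); rewrite VE => XVE.
  exact: (indep_drop_right (q := 1) (r := 1) XVE).
have lin : (i < n)%N by lia.
have [i0|i_gt0] := posnP i; first by have := HVE i lin; rewrite i0.
rewrite XV; apply: (indep_assocl (mE i lin) _ (HVE i lin)).
by rewrite -VE; exact: HF1.
Qed.
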